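(* Let $\{\cdot,\cdot\}$ be a non-degenerate partially decoupled hydrodynamic Poisson bracket in the variables $(\rho,u,w_1,\dots,w_{N-2})$, and let $\boldsymbol\nu=\boldsymbol\nu(\mathbf w)$ be local coordinates in which the microscopic bracket takes the form $\int\partial_xF_k\,g_{kl}\,G_l\,\mathrm dx$ with $g$ a constant symmetric invertible matrix. Then the $N-2$ functionals $$C_k[\rho,\boldsymbol\nu]=\int\rho\,\nu_k\,\mathrm dx,\qquad k=1,\dots,N-2,$$ together with $$C[\rho]=\int\rho\,\mathrm dx,\qquad C[\rho,u,\boldsymbol\nu]=\int\Big(u-\frac{\rho}{2}\boldsymbol\nu\cdot g^{-1}\boldsymbol\nu\Big)\mathrm dx,$$ are Casimir invariants of the bracket, i.e. $\{C,F\}=0$ for every functional $F$.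
   Context: Fields vanish at infinity with all derivatives. A partially decoupled hydrodynamic bracket in $(\rho,u,w_1,\dots,w_{N-2})$ is $$\{F,G\}=\int\Big(\partial_xF_uG_\rho-F_\rho\partial_xG_u+\partial_xw_k\Big(F_u\frac{G_k}{\rho}-\frac{F_k}{\rho}G_u\Big)+\partial_x\Big(\frac{F_k}{\rho}\Big)\alpha_{kl}(\mathbf w)\frac{G_l}{\rho}+\frac{F_k}{\rho}\beta_{kl}(\mathbf w,\partial_x\mathbf w)\frac{G_l}{\rho}\Big)\mathrm dx,$$ with $F_u,F_\rho,F_k=\delta F/\delta w_k$ functional derivatives, sums over $k,l=1,\dots,N-2$, $\alpha(\mathbf w)$ symmetric depending only on $\mathbf w$, $\beta$ linear in $\partial_x\mathbf w$, $\partial_x\alpha=\beta+\beta^t$. Its microscopic bracket is $\{F,G\}_{\rm m}=\int(\partial_xF_k\alpha_{kl}(\mathbf w)G_l+F_k\beta_{kl}(\mathbf w,\partial_x\mathbf w)G_l)\mathrm dx$ on functionals of $\mathbf w$. Non-degenerate means the full coefficient matrix of $\partial_x F\cdot G$ is invertible; Poisson means the Jacobi identity holds. *)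

From Stdlib Require Import Reals Lra List Classical ClassicalEpsilon.
From Coquelicot Require Import Coquelicot.
Open Scope R_scope.

Definition fsum (n : nat) (f : nat -> R) : R :=
  fold_right Rplus 0 (map f (seq 0 n)).

Definition kdelta (i j : nat) : R := if Nat.eqb i j then 1 else 0.

(* A field configuration (rho, u, nu_0, ..., nu_{n-1}), n = N-2;
   components fn k with k >= n are ignored. *)
Record field := mkField { fr : R -> R; fu : R -> R; fn : nat -> R -> R }.

Definition field_axpy (phi : field) (e : R) (psi : field) : field :=
  mkField (fun x => fr phi x + e * fr psi x)
          (fun x => fu phi x + e * fu psi x)
          (fun k x => fn phi k x + e * fn psi k x).

Definition smooth (f : R -> R) : Prop := forall (m : nat) (x : R), ex_derive_n f m x.

Definition decaying (f : R -> R) : Prop :=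
  forall m : nat, is_lim (Derive_n f m) p_infty 0 /\ is_lim (Derive_n f m) m_infty 0.

Definition compact_support (f : R -> R) : Prop :=
  exists M : R, forall x, M < Rabs x -> f x = 0.

(* admissible configurations: smooth fields vanishing at infinity with all
   derivatives, rho nowhere zero (needed for the 1/rho in the bracket) *)
Definition admissible (n : nat) (phi : field) : Prop :=
  smooth (fr phi) /\ decaying (fr phi) /\ (forall x, fr phi x <> 0) /\
  smooth (fu phi) /\ decaying (fu phi) /\
  (forall k, (k < n)%nat -> smooth (fn phi k) /\ decaying (fn phi k)).

Definition test_field (n : nat) (psi : field) : Prop :=
  smooth (fr psi) /\ compact_support (fr psi) /\
  smooth (fu psi) /\ compact_support (fu psi) /\
  (forall k, (k < n)%nat -> smooth (fn psi k) /\ compact_support (fn psi k)) /\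
  (forall k, (n <= k)%nat -> forall x, fn psi k x = 0).

Definition improper_int_is (f : R -> R) (l : R) : Prop :=
  is_RInt_gen f (Rbar_locally m_infty) (Rbar_locally p_infty) l.

(* integral over the real line (0 if it does not converge) *)
Definition integral (f : R -> R) : R :=
  match excluded_middle_informative (exists l, improper_int_is f l) with
  | left H => proj1_sig (constructive_indefinite_description _ H)
  | right _ => 0
  end.

(* d = (dF/drho, dF/du, dF/dnu_k) is the (continuous) variational derivative of
   the functional F at phi:  d/de F[phi + e psi]|_{e=0} = int d . psi dx *)
Definition var_deriv (n : nat) (F : field -> R) (phi d : field) : Prop :=
  (forall x, continuous (fr d) x) /\ (forall x, continuous (fu d) x) /\
  (forall k, (k < n)%nat -> forall x, continuous (fn d k) x) /\
  forall psi, test_field n psi ->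
    exists l,
      improper_int_is (fun x => fr d x * fr psi x + fu d x * fu psi x
                               + fsum n (fun k => fn d k x * fn psi k x)) l /\
      is_derive (fun e => F (field_axpy phi e psi)) 0 l.

Definition regular_deriv (n : nat) (d : field) : Prop :=
  smooth (fr d) /\ decaying (fr d) /\ smooth (fu d) /\ decaying (fu d) /\
  (forall k, (k < n)%nat -> smooth (fn d k) /\ decaying (fn d k)).

(* Density of the partially decoupled hydrodynamic bracket written in the flat
   coordinates (rho,u,nu), where alpha = g (constant) and beta = 0. *)
Definition bracket_density (n : nat) (g : nat -> nat -> R) (phi dF dG : field)
  (x : R) : R :=
  Derive (fu dF) x * fr dG x - fr dF x * Derive (fu dG) x
  + fsum n (fun k => Derive (fn phi k) x *
        (fu dF x * fn dG k x / fr phi x - fn dF k x / fr phi x * fu dG x))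
  + fsum n (fun k => fsum n (fun l =>
        Derive (fun y => fn dF k y / fr phi y) x * g k l * (fn dG l x / fr phi x))).

Definition is_casimir (n : nat) (g : nat -> nat -> R) (C : field -> R) : Prop :=
  forall phi, admissible n phi ->
  forall dC, var_deriv n C phi dC ->
  forall (F : field -> R) (dF : field), var_deriv n F phi dF -> regular_deriv n dF ->
    improper_int_is (bracket_density n g phi dC dF) 0.

Definition C_rho (phi : field) : R := integral (fun x => fr phi x).
Definition C_nu (k : nat) (phi : field) : R := integral (fun x => fr phi x * fn phi k x).
Definition C_mix (n : nat) (ginv : nat -> nat -> R) (phi : field) : R :=
  integral (fun x => fu phi x - fr phi x / 2 *
     fsum n (fun k => fsum n (fun l => fn phi k x * ginv k l * fn phi l x))).

From Stdlib Require Import Reals Lra Lia List Classical ClassicalEpsilon FunctionalExtensionality.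
From Coquelicot Require Import Coquelicot.
Open Scope R_scope.

(* Testing the first variation of an integral functional C = int I(rho, u, nu) dx against
   smooth bumps (built from the flat function exp (-1/x)) placed in a single component
   identifies its variational derivative, by the fundamental lemma of the calculus of
   variations.  In the flat coordinates nu, where the microscopic metric g is constant, the
   bracket density {C, F} is then an exact derivative:
     - d_x F_u                    for C = int rho,
     - d_x (nu_k F_u)             for C = int rho nu_k,
     d_x (Q(nu) F_u / 2)          for C = int (u - rho Q(nu) / 2),  Q(nu) = nu . g^-1 nu,
   the F_k terms of the last one cancelling because sum_k d_x (dQ/dnu_k) g_kl = 2 d_x nu_l.
   Since F_u and nu vanish at infinity, every bracket {C, F} integrates to 0. *)

Lemma fsum_0 (f : nat -> R) : fsum 0 f = 0.
Proof. reflexivity. Qed.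

Lemma fsum_S n (f : nat -> R) : fsum (S n) f = fsum n f + f n.
Proof.
  unfold fsum. rewrite seq_S, map_app, fold_right_app. simpl.
  induction (map f (seq 0 n)) as [|a l IH]; simpl; [ring | rewrite IH; ring].
Qed.

Lemma fsum_ext n (f g : nat -> R) :
  (forall i, (i < n)%nat -> f i = g i) -> fsum n f = fsum n g.
Proof.
  induction n as [|n IH]; intros H; [reflexivity|].
  rewrite !fsum_S, IH, H; auto; intros; apply H; lia.
Qed.

Lemma fsum_plus n (f g : nat -> R) :
  fsum n (fun i => f i + g i) = fsum n f + fsum n g.
Proof. induction n as [|n IH]; [rewrite !fsum_0; ring | rewrite !fsum_S, IH; ring]. Qed.

Lemma fsum_scal n c (f : nat -> R) : fsum n (fun i => c * f i) = c * fsum n f.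
Proof. induction n as [|n IH]; [rewrite !fsum_0; ring | rewrite !fsum_S, IH; ring]. Qed.

Lemma fsum_scal_r n c (f : nat -> R) : fsum n (fun i => f i * c) = fsum n f * c.
Proof. induction n as [|n IH]; [rewrite !fsum_0; ring | rewrite !fsum_S, IH; ring]. Qed.

Lemma fsum_eq0 n (f : nat -> R) : (forall i, (i < n)%nat -> f i = 0) -> fsum n f = 0.
Proof.
  induction n as [|n IH]; intros H; [reflexivity|].
  rewrite fsum_S, IH, H; [ring | lia | intros; apply H; lia].
Qed.

Lemma fsum_swap n m (f : nat -> nat -> R) :
  fsum n (fun i => fsum m (fun j => f i j)) = fsum m (fun j => fsum n (fun i => f i j)).
Proof.
  induction n as [|n IH].
  - symmetry. now apply fsum_eq0.
  - rewrite fsum_S, IH, <- fsum_plus. apply fsum_ext. intros. now rewrite fsum_S.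
Qed.

Lemma fsum_kdelta_r n j (a : nat -> R) : (j < n)%nat ->
  fsum n (fun i => a i * kdelta i j) = a j.
Proof.
  induction n as [|n IH]; intros Hj; [lia|].
  rewrite fsum_S. unfold kdelta at 2.
  destruct (Nat.eqb_spec n j) as [->|Hne].
  - rewrite fsum_eq0; [ring|]. intros i Hi. unfold kdelta.
    destruct (Nat.eqb_spec i j); [lia | ring].
  - rewrite IH by lia. ring.
Qed.

Lemma fsum_kdelta_l n j (a : nat -> R) : (j < n)%nat ->
  fsum n (fun i => kdelta j i * a i) = a j.
Proof.
  intros Hj. rewrite <- (fsum_kdelta_r n j a Hj). apply fsum_ext. intros i _.
  unfold kdelta. rewrite Nat.eqb_sym. ring.
Qed.

Lemma kdelta_sym i j : kdelta i j = kdelta j i.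
Proof. unfold kdelta. now rewrite Nat.eqb_sym. Qed.

Lemma continuous_Rplus (f g : R -> R) x :
  continuous f x -> continuous g x -> continuous (fun y => f y + g y) x.
Proof. apply (continuous_plus (U := R_UniformSpace) (V := R_NormedModule)). Qed.

Lemma continuous_Rmult (f g : R -> R) x :
  continuous f x -> continuous g x -> continuous (fun y => f y * g y) x.
Proof. apply (continuous_mult (U := R_UniformSpace) (K := R_AbsRing)). Qed.

Lemma continuous_Ropp (f : R -> R) x : continuous f x -> continuous (fun y => - f y) x.
Proof. apply (continuous_opp (U := R_UniformSpace) (V := R_NormedModule)). Qed.

Lemma continuous_Rscal c (f : R -> R) x : continuous f x -> continuous (fun y => c * f y) x.
Proof.
  apply continuous_Rmult, (continuous_const (U := R_UniformSpace) (V := R_UniformSpace)).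
Qed.

Lemma is_derive_Rconst (c x : R) : is_derive (fun _ => c) x 0.
Proof. apply (is_derive_const (K := R_AbsRing) (V := R_NormedModule)). Qed.

Lemma is_derive_Rplus (f g : R -> R) x df dg :
  is_derive f x df -> is_derive g x dg -> is_derive (fun y => f y + g y) x (df + dg).
Proof. apply (is_derive_plus (K := R_AbsRing) (V := R_NormedModule)). Qed.

Lemma is_derive_Rmult (f g : R -> R) x df dg :
  is_derive f x df -> is_derive g x dg -> is_derive (fun y => f y * g y) x (df * g x + f x * dg).
Proof. intros Hf Hg. apply (is_derive_mult (K := R_AbsRing)); auto. apply Rmult_comm. Qed.

Lemma is_derive_fsum n (f : nat -> R -> R) (df : nat -> R) x :
  (forall i, (i < n)%nat -> is_derive (f i) x (df i)) ->
  is_derive (fun y => fsum n (fun i => f i y)) x (fsum n df).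
Proof.
  induction n as [|n IH]; intros H.
  - rewrite fsum_0. apply is_derive_ext with (fun _ => 0); [reflexivity | apply is_derive_Rconst].
  - apply is_derive_ext with (fun y => fsum n (fun i => f i y) + f n y);
      [intros; symmetry; apply fsum_S|].
    rewrite fsum_S. apply is_derive_Rplus; [apply IH; intros; apply H | apply H]; lia.
Qed.

Lemma Derive_eq_const (f : R -> R) c x : (forall y, f y = c) -> Derive f x = 0.
Proof. intros H. rewrite (Derive_ext f (fun _ => c)) by exact H. apply Derive_const. Qed.

Lemma smooth_ex_derive f x : smooth f -> ex_derive f x.
Proof. intros H. exact (H 1%nat x). Qed.

Lemma smooth_is_derive f x : smooth f -> is_derive f x (Derive f x).
Proof. intros H. apply Derive_correct, smooth_ex_derive, H. Qed.

Lemma smooth_continuous f x : smooth f -> continuous f x.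
Proof.
  intros H. apply (ex_derive_continuous (K := R_AbsRing) (V := R_NormedModule)).
  apply smooth_ex_derive, H.
Qed.

Lemma Derive_n_S_Derive f n x : Derive_n f (S n) x = Derive_n (Derive f) n x.
Proof.
  revert x. induction n as [|n IH]; intros x; [reflexivity|].
  apply Derive_ext. exact IH.
Qed.

Lemma smooth_Derive f : smooth f -> smooth (Derive f).
Proof.
  intros H [|m] x; [exact I|].
  apply ex_derive_ext with (Derive_n f (S m)); [apply Derive_n_S_Derive|].
  exact (H (S (S m)) x).
Qed.

Lemma ex_derive_n_S_of_Derive f m x :
  ex_derive f x -> ex_derive_n (Derive f) m x -> ex_derive_n f (S m) x.
Proof.
  intros H1 H. destruct m as [|m]; [exact H1|].
  apply ex_derive_ext with (Derive_n (Derive f) m); [|exact H].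
  intros y. symmetry. apply Derive_n_S_Derive.
Qed.

Lemma smooth_ext f g : (forall x, f x = g x) -> smooth f -> smooth g.
Proof. intros E H m x. exact (ex_derive_n_ext f g m x E (H m x)). Qed.

Lemma smooth_const c : smooth (fun _ => c).
Proof. intros m x. apply ex_derive_n_const. Qed.

Lemma smooth_plus f g : smooth f -> smooth g -> smooth (fun x => f x + g x).
Proof.
  intros Hf Hg m x.
  apply ex_derive_n_plus; apply filter_forall; intros y k _; [apply Hf | apply Hg].
Qed.

Lemma smooth_opp f : smooth f -> smooth (fun x => - f x).
Proof. intros H m x. apply ex_derive_n_opp, H. Qed.

Lemma smooth_mult f g : smooth f -> smooth g -> smooth (fun x => f x * g x).
Proof.
  intros Hf Hg.
  assert (H : forall m u v, smooth u -> smooth v ->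
            forall k x, (k <= m)%nat -> ex_derive_n (fun y => u y * v y) k x).
  { induction m as [|m IH]; intros u v Hu Hv [|k] x Hk; try exact I; [lia|].
    apply ex_derive_n_S_of_Derive.
    - apply ex_derive_mult; apply smooth_ex_derive; assumption.
    - apply ex_derive_n_ext with (fun y => Derive u y * v y + u y * Derive v y).
      + intros y. symmetry. apply Derive_mult; apply smooth_ex_derive; assumption.
      + apply ex_derive_n_plus; apply filter_forall; intros y j Hj;
          apply IH; auto using smooth_Derive; lia. }
  intros m x. exact (H m f g Hf Hg m x (le_n m)).
Qed.

Lemma smooth_fsum n (f : nat -> R -> R) :
  (forall i, (i < n)%nat -> smooth (f i)) -> smooth (fun x => fsum n (fun i => f i x)).
Proof.
  induction n as [|n IH]; intros H.
  - exact (smooth_const 0).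
  - apply smooth_ext with (fun x => fsum n (fun i => f i x) + f n x).
    + intros x. symmetry. apply fsum_S.
    + apply smooth_plus; [apply IH; intros; apply H; lia | apply H; lia].
Qed.

Lemma smooth_comp_sub_r f a : smooth f -> smooth (fun x => f (x - a)).
Proof. intros H m x. apply ex_derive_n_comp_trans, H. Qed.

Lemma smooth_comp_sub_l f b : smooth f -> smooth (fun x => f (b - x)).
Proof.
  intros H. apply smooth_ext with (fun x => f (- x + b)); [intros x; f_equal; ring|].
  intros m x. apply (ex_derive_n_comp_opp (fun y => f (y + b))).
  apply filter_forall. intros y k _. apply ex_derive_n_comp_trans, H.
Qed.

Lemma smooth_of_derive_closed (P : (R -> R) -> Prop) :
  (forall f, P f -> exists f', P f' /\ forall x, is_derive f x (f' x)) ->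
  forall f, P f -> smooth f.
Proof.
  intros Hclosed f Hf.
  assert (Hn : forall m, exists h, P h /\ forall x, Derive_n f m x = h x).
  { induction m as [|m [h [Hh Eh]]]; [exists f; auto|].
    destruct (Hclosed h Hh) as [h' [Hh' Dh]]. exists h'. split; [exact Hh'|].
    intros x. simpl. rewrite (Derive_ext _ h _ Eh). now apply is_derive_unique. }
  intros [|m] x; [exact I|].
  destruct (Hn m) as [h [Hh Eh]]. destruct (Hclosed h Hh) as [h' [_ Dh]].
  apply ex_derive_ext with h; [intros; symmetry; apply Eh|]. exists (h' x). apply Dh.
Qed.

Inductive expinv_poly : (R -> R) -> Prop :=
| expinv_poly_monomial k : expinv_poly (fun x => exp (- / x) / x ^ k)
| expinv_poly_plus f g : expinv_poly f -> expinv_poly g -> expinv_poly (fun x => f x + g x)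
| expinv_poly_scal c f : expinv_poly f -> expinv_poly (fun x => c * f x)
| expinv_poly_ext f g : expinv_poly f -> (forall x, 0 < x -> f x = g x) -> expinv_poly g.

Lemma expinv_monomial_le k x : 0 < x -> exp (- / x) / x ^ k <= INR (Factorial.fact (S k)) * x.
Proof.
  intros Hx.
  set (c := INR (Factorial.fact (S k))). set (X := x ^ k).
  assert (Hc : 0 < c) by apply INR_fact_lt_0.
  assert (HX : 0 < X) by (apply pow_lt; lra).
  assert (Htaylor : (/ x) ^ S k / c <= exp (/ x)).
  { pose proof (exp_ge_taylor (/ x) (S k) (Rlt_le _ _ (Rinv_0_lt_compat _ Hx))) as H.
    rewrite tech5 in H.
    assert (0 <= sum_f_R0 (fun j => (/ x) ^ j / INR (Factorial.fact j)) k).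
    { apply cond_pos_sum. intros j. apply Rdiv_le_0_compat.
      - apply pow_le. left. apply Rinv_0_lt_compat, Hx.
      - apply INR_fact_lt_0. }
    unfold c. lra. }
  assert (Hpow : (/ x) ^ S k = / (X * x)).
  { unfold X. rewrite pow_inv, <- tech_pow_Rmult. f_equal. ring. }
  rewrite Hpow in Htaylor.
  pose proof (exp_pos (/ x)) as He.
  rewrite exp_Ropp.
  replace (/ exp (/ x) / X) with (/ (exp (/ x) * X)) by (field; lra).
  replace (c * x) with (/ (/ (X * x) / c * X)) by (field; lra).
  apply Rinv_le_contravar; [|apply Rmult_le_compat_r; lra].
  apply Rmult_lt_0_compat; [apply Rdiv_lt_0_compat; [apply Rinv_0_lt_compat; nra | lra] | lra].
Qed.

Lemma expinv_poly_linear_bound f :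
  expinv_poly f -> exists C, forall x, 0 < x -> Rabs (f x) <= C * x.
Proof.
  induction 1 as [k | f g _ [C1 H1] _ [C2 H2] | c f _ [C H] | f g _ [C H] E].
  - exists (INR (Factorial.fact (S k))). intros x Hx.
    rewrite Rabs_right; [now apply expinv_monomial_le|].
    apply Rle_ge, Rdiv_le_0_compat; [left; apply exp_pos | apply pow_lt; lra].
  - exists (C1 + C2). intros x Hx. specialize (H1 x Hx). specialize (H2 x Hx).
    pose proof (Rabs_triang (f x) (g x)). lra.
  - exists (Rabs c * C). intros x Hx. rewrite Rabs_mult, Rmult_assoc.
    apply Rmult_le_compat_l; [apply Rabs_pos | auto].
  - exists C. intros x Hx. rewrite <- E by exact Hx. auto.
Qed.

Lemma expinv_poly_div f : expinv_poly f -> expinv_poly (fun x => f x / x).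
Proof.
  induction 1 as [k | f g _ IHf _ IHg | c f _ IH | f g _ IH E].
  - apply expinv_poly_ext with (fun x => exp (- / x) / x ^ S k); [constructor|].
    intros x Hx. simpl. field. split; [apply pow_nonzero|]; lra.
  - eapply expinv_poly_ext; [apply (expinv_poly_plus _ _ IHf IHg)|].
    intros x Hx. simpl. field. lra.
  - eapply expinv_poly_ext; [apply (expinv_poly_scal c _ IH)|].
    intros x Hx. simpl. field. lra.
  - eapply expinv_poly_ext; [apply IH|]. intros x Hx. simpl. now rewrite E.
Qed.

Lemma is_derive_expinv_monomial k x : 0 < x ->
  is_derive (fun x => exp (- / x) / x ^ k) x
    (exp (- / x) / x ^ S (S k) + - INR k * (exp (- / x) / x ^ S k)).
Proof.
  intros Hx. assert (Hx0 : x <> 0) by lra.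
  assert (Hpow : forall m, x ^ m <> 0) by (intros; now apply pow_nonzero).
  destruct k as [|k].
  - auto_derive; [repeat split; auto with real|]. simpl. field. exact Hx0.
  - auto_derive; [repeat split; auto|].
    change (match k with 0%nat => 1 | S _ => INR k + 1 end) with (INR (S k)).
    cbn [pow]. field. auto.
Qed.

Lemma expinv_poly_derive f : expinv_poly f ->
  exists f', expinv_poly f' /\ forall x, 0 < x -> is_derive f x (f' x).
Proof.
  induction 1 as [k | f g _ [f' [Hf' Df]] _ [g' [Hg' Dg]] | c f _ [f' [Hf' Df]]
                 | f g _ [f' [Hf' Df]] E].
  - eexists. split; [|intros x Hx; exact (is_derive_expinv_monomial k x Hx)].
    apply expinv_poly_plus; [|apply expinv_poly_scal]; constructor.
  - exists (fun x => f' x + g' x). split; [now apply expinv_poly_plus|].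
    intros x Hx. apply is_derive_Rplus; auto.
  - exists (fun x => c * f' x). split; [now apply expinv_poly_scal|].
    intros x Hx. apply is_derive_scal. auto.
  - exists f'. split; [exact Hf'|]. intros x Hx.
    apply is_derive_ext_loc with f; [|auto].
    apply locally_interval with (Finite 0) p_infty; simpl; auto.
Qed.

Definition extend0 (f : R -> R) (x : R) : R := if Rlt_dec 0 x then f x else 0.

Lemma is_derive_extend0 f f' : expinv_poly f -> (forall x, 0 < x -> is_derive f x (f' x)) ->
  forall x, is_derive (extend0 f) x (extend0 f' x).
Proof.
  intros Hf Df x. unfold extend0 at 2.
  destruct (Rtotal_order x 0) as [Hx|[->|Hx]].
  - destruct (Rlt_dec 0 x); [lra|].
    apply is_derive_ext_loc with (fun _ => 0); [|apply is_derive_Rconst].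
    apply locally_interval with m_infty (Finite 0); simpl; auto.
    intros y _ Hy. unfold extend0. destruct (Rlt_dec 0 y); [lra | reflexivity].
  - destruct (Rlt_dec 0 0); [lra|].
    (* the difference quotient at 0 is f h / h = O(h) *)
    destruct (expinv_poly_linear_bound _ (expinv_poly_div f Hf)) as [C HC].
    apply is_derive_Reals. intros eps Heps.
    assert (Hd : 0 < eps / (Rabs C + 1)) by (apply Rdiv_lt_0_compat; pose proof (Rabs_pos C); lra).
    exists (mkposreal _ Hd). intros h Hh Hhd. simpl in Hhd.
    rewrite Rplus_0_l. unfold extend0. destruct (Rlt_dec 0 0); [lra|].
    destruct (Rlt_dec 0 h) as [Hpos|Hneg].
    + rewrite Rabs_right in Hhd by lra.
      replace ((f h - 0) / h - 0) with (f h / h) by (field; lra).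
      apply Rle_lt_trans with (C * h); [now apply HC|].
      apply Rle_lt_trans with (Rabs C * (eps / (Rabs C + 1))).
      * apply Rle_trans with (Rabs C * h); [apply Rmult_le_compat_r; [lra | apply RRle_abs]|].
        apply Rmult_le_compat_l; [apply Rabs_pos | lra].
      * apply Rmult_lt_reg_r with (Rabs C + 1); [pose proof (Rabs_pos C); lra|].
        field_simplify; [|pose proof (Rabs_pos C); lra]. nra.
    + replace ((0 - 0) / h - 0) with 0 by (field; lra). rewrite Rabs_R0. exact Heps.
  - destruct (Rlt_dec 0 x); [|lra].
    apply is_derive_ext_loc with f; [|auto].
    apply locally_interval with (Finite 0) p_infty; simpl; auto.
    intros y Hy _. unfold extend0. destruct (Rlt_dec 0 y); [reflexivity | lra].
Qed.

Lemma smooth_extend0 f : expinv_poly f -> smooth (extend0 f).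
Proof.
  intros Hf.
  apply (smooth_of_derive_closed (fun h => exists f, expinv_poly f /\ h = extend0 f));
    [|now exists f].
  intros h [g [Hg ->]]. destruct (expinv_poly_derive g Hg) as [g' [Hg' Dg]].
  exists (extend0 g'). split; [now exists g'|]. now apply is_derive_extend0.
Qed.

Definition bump (a b x : R) : R :=
  extend0 (fun t => exp (- / t)) (x - a) * extend0 (fun t => exp (- / t)) (b - x).

Lemma smooth_bump a b : smooth (bump a b).
Proof.
  assert (H : smooth (extend0 (fun t => exp (- / t)))).
  { apply smooth_extend0, expinv_poly_ext with (fun x => exp (- / x) / x ^ 0);
      [constructor | intros x _; simpl; field]. }
  apply smooth_mult; [apply smooth_comp_sub_r | apply smooth_comp_sub_l]; exact H.
Qed.

Lemma bump_pos a b x : a < x < b -> 0 < bump a b x.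
Proof.
  intros Hx. unfold bump, extend0.
  destruct (Rlt_dec 0 (x - a)); [|lra]. destruct (Rlt_dec 0 (b - x)); [|lra].
  apply Rmult_lt_0_compat; apply exp_pos.
Qed.

Lemma bump_out a b x : x <= a \/ b <= x -> bump a b x = 0.
Proof.
  intros Hx. unfold bump, extend0.
  destruct (Rlt_dec 0 (x - a)); destruct (Rlt_dec 0 (b - x)); try ring. lra.
Qed.

Lemma compact_support_bump a b : compact_support (bump a b).
Proof.
  exists (Rabs a + Rabs b). intros x Hx. apply bump_out.
  pose proof (Rabs_pos a). pose proof (Rabs_pos b).
  pose proof (RRle_abs b). pose proof (RRle_abs (- a)). rewrite Rabs_Ropp in *.
  destruct (Rle_dec 0 x).
  - rewrite (Rabs_right x) in Hx by lra. right. lra.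
  - rewrite (Rabs_left x) in Hx by lra. left. lra.
Qed.

Definition vanishes_at_infinity (f : R -> R) : Prop :=
  is_lim f m_infty 0 /\ is_lim f p_infty 0.

Lemma decaying_vanishes f : decaying f -> vanishes_at_infinity f.
Proof. intros H. split; apply (H 0%nat). Qed.

Lemma vanishes_opp f : vanishes_at_infinity f -> vanishes_at_infinity (fun x => - f x).
Proof.
  intros [Hm Hp]. unfold vanishes_at_infinity.
  replace (Finite 0) with (Rbar_opp (Finite 0)) by (simpl; f_equal; ring).
  split; apply is_lim_opp; assumption.
Qed.

Lemma vanishes_mult f g : vanishes_at_infinity f -> vanishes_at_infinity g ->
  vanishes_at_infinity (fun x => f x * g x).
Proof.
  intros [Hfm Hfp] [Hgm Hgp]. unfold vanishes_at_infinity.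
  replace (Finite 0) with (Rbar_mult (Finite 0) (Finite 0)) by (simpl; f_equal; ring).
  split; apply is_lim_mult; simpl; auto.
Qed.

Lemma vanishes_scal c f : vanishes_at_infinity f -> vanishes_at_infinity (fun x => c * f x).
Proof.
  intros [Hm Hp]. unfold vanishes_at_infinity.
  replace (Finite 0) with (Rbar_mult (Finite c) (Finite 0)) by (simpl; f_equal; ring).
  split; apply is_lim_mult; simpl; auto; apply is_lim_const.
Qed.

Lemma vanishes_ext f g : (forall x, f x = g x) ->
  vanishes_at_infinity f -> vanishes_at_infinity g.
Proof. intros E [Hm Hp]. split; eapply is_lim_ext; eauto. Qed.

Lemma vanishes_fsum n (f : nat -> R -> R) : (forall i, (i < n)%nat -> vanishes_at_infinity (f i)) ->
  vanishes_at_infinity (fun x => fsum n (fun i => f i x)).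
Proof.
  induction n as [|n IH]; intros H.
  - split; apply (is_lim_const 0).
  - destruct (IH (fun i Hi => H i ltac:(lia))) as [Hm Hp]. destruct (H n ltac:(lia)) as [Hnm Hnp].
    split; (eapply is_lim_ext; [intros; symmetry; apply fsum_S|]);
      eapply is_lim_plus; eauto; simpl; unfold is_Rbar_plus; simpl; f_equal; f_equal; ring.
Qed.

Lemma improper_int_Derive_vanishing Phi : smooth Phi -> vanishes_at_infinity Phi ->
  improper_int_is (Derive Phi) 0.
Proof.
  intros HPhi [Hm Hp]. unfold improper_int_is. rewrite <- (Rminus_0_r 0).
  apply (is_RInt_gen_Derive (Fa := Rbar_locally m_infty) (Fb := Rbar_locally p_infty)).
  - apply filter_forall. intros. apply smooth_ex_derive, HPhi.
  - apply filter_forall. intros. apply smooth_continuous, smooth_Derive, HPhi.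
  - exact Hm.
  - exact Hp.
Qed.

Definition integrable (f : R -> R) : Prop := exists l, improper_int_is f l.

Lemma improper_int_unique f l1 l2 : improper_int_is f l1 -> improper_int_is f l2 -> l1 = l2.
Proof.
  intros H1 H2. unfold improper_int_is in *.
  apply (is_RInt_gen_unique (V := R_CompleteNormedModule)) in H1, H2. congruence.
Qed.

Lemma improper_int_ext (f g : R -> R) l :
  (forall x, f x = g x) -> improper_int_is f l -> improper_int_is g l.
Proof.
  intros E. apply (is_RInt_gen_ext (V := R_NormedModule) (Fa := Rbar_locally m_infty)
                     (Fb := Rbar_locally p_infty)).
  apply filter_forall. intros _ x _. apply E.
Qed.

Lemma integral_eq f l : improper_int_is f l -> integral f = l.
Proof.
  intros H. unfold integral. destruct excluded_middle_informative as [Hex|Hnot].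
  - destruct (constructive_indefinite_description _ Hex) as [l' Hl']. simpl.
    exact (improper_int_unique f l' l Hl' H).
  - exfalso. apply Hnot. now exists l.
Qed.

Lemma integral_not_integrable f : ~ integrable f -> integral f = 0.
Proof. intros H. unfold integral. now destruct excluded_middle_informative. Qed.

Lemma RInt_eq0 (h : R -> R) a b : (forall x, Rmin a b < x < Rmax a b -> h x = 0) -> RInt h a b = 0.
Proof.
  intros H. rewrite (RInt_ext h (fun _ => 0)) by exact H.
  rewrite RInt_const. apply Rmult_0_r.
Qed.

Lemma improper_int_compact (h : R -> R) a b : a <= b -> (forall x, continuous h x) ->
  (forall x, x < a \/ b < x -> h x = 0) -> improper_int_is h (RInt h a b).
Proof.
  intros Hab Hc Hout.
  assert (Hex : forall c d, ex_RInt h c d)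
    by (intros; apply (ex_RInt_continuous (V := R_CompleteNormedModule)); auto).
  (* the primitive H y = int_a^y h is 0 left of a and int_a^b h right of b *)
  pose (H := fun y => RInt h a y).
  assert (HD : forall x, is_derive H x (h x)).
  { intros x. apply is_derive_RInt with a; [|apply Hc].
    apply filter_forall. intros y. apply RInt_correct, Hex. }
  assert (EH : Derive H = h).
  { apply functional_extensionality. intros x. apply is_derive_unique, HD. }
  unfold improper_int_is. rewrite <- (Rminus_0_r (RInt h a b)), <- EH at 1.
  apply (is_RInt_gen_Derive (Fa := Rbar_locally m_infty) (Fb := Rbar_locally p_infty)).
  - apply filter_forall. intros. eexists. apply HD.
  - apply filter_forall. intros. rewrite EH. apply Hc.
  - apply filterlim_ext_loc with (fun _ => 0); [|apply filterlim_const].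
    exists a. intros x Hx. symmetry. apply RInt_eq0. intros y Hy. apply Hout.
    left. rewrite Rmax_left in Hy by lra. lra.
  - apply filterlim_ext_loc with (fun _ => RInt h a b); [|apply filterlim_const].
    exists b. intros x Hx. unfold H. rewrite <- (RInt_Chasles h a b x) by apply Hex.
    rewrite (RInt_eq0 h b x); [symmetry; apply Rplus_0_r|].
    intros y Hy. apply Hout. right. rewrite Rmin_left in Hy by lra. lra.
Qed.

Lemma improper_int_plus_compact (f h : R -> R) a b l : improper_int_is f l -> a <= b ->
  (forall x, continuous h x) -> (forall x, x < a \/ b < x -> h x = 0) ->
  improper_int_is (fun x => f x + h x) (l + RInt h a b).
Proof.
  intros Hf Hab Hc Hout. unfold improper_int_is.
  apply (is_RInt_gen_plus (V := R_NormedModule) (Fa := Rbar_locally m_infty)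
           (Fb := Rbar_locally p_infty)); [exact Hf|].
  now apply improper_int_compact.
Qed.

Lemma integrable_plus_compact (f h : R -> R) a b : integrable (fun x => f x + h x) -> a <= b ->
  (forall x, continuous h x) -> (forall x, x < a \/ b < x -> h x = 0) -> integrable f.
Proof.
  intros [l Hl] Hab Hc Hout. eexists.
  eapply improper_int_ext;
    [|apply (improper_int_plus_compact _ (fun x => -1 * h x) a b l Hl Hab)].
  - intros x. simpl. ring.
  - intros x. now apply continuous_Rscal.
  - intros x Hx. rewrite Hout by exact Hx. ring.
Qed.

Lemma is_derive_integral_quadratic (f A B : R -> R) a b l : improper_int_is f l -> a <= b ->
  (forall x, continuous A x) -> (forall x, continuous B x) ->
  (forall x, x < a \/ b < x -> A x = 0) -> (forall x, x < a \/ b < x -> B x = 0) ->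
  is_derive (fun e => integral (fun x => f x + e * A x + e ^ 2 * B x)) 0 (RInt A a b).
Proof.
  intros Hf Hab HA HB ZA ZB.
  assert (Hex : forall h, (forall x, continuous h x) -> ex_RInt h a b)
    by (intros; apply (ex_RInt_continuous (V := R_CompleteNormedModule)); auto).
  apply is_derive_ext with (fun e => l + e * RInt A a b + e ^ 2 * RInt B a b).
  - intros e. symmetry. apply integral_eq.
    assert (E : RInt (fun x => e * A x + e ^ 2 * B x) a b = e * RInt A a b + e ^ 2 * RInt B a b).
    { rewrite (RInt_plus (V := R_CompleteNormedModule) (fun x => e * A x) (fun x => e ^ 2 * B x))
        by (apply Hex; intros; now apply continuous_Rscal).
      rewrite !(RInt_scal (V := R_CompleteNormedModule)) by (apply Hex; assumption).
      reflexivity. }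
    rewrite Rplus_assoc, <- E.
    eapply improper_int_ext;
      [|apply (improper_int_plus_compact _ (fun x => e * A x + e ^ 2 * B x) a b l Hf Hab)].
    + intros x. simpl. ring.
    + intros x. apply continuous_Rplus; now apply continuous_Rscal.
    + intros x Hx. rewrite ZA, ZB by exact Hx. ring.
  - auto_derive; [exact I|]. change (RInt (fun x => A x) a b) with (RInt A a b). ring.
Qed.

Lemma integral_quadratic_not_integrable (f A B : R -> R) a b : ~ integrable f -> a <= b ->
  (forall x, continuous A x) -> (forall x, continuous B x) ->
  (forall x, x < a \/ b < x -> A x = 0) -> (forall x, x < a \/ b < x -> B x = 0) ->
  forall e, integral (fun x => f x + e * A x + e ^ 2 * B x) = 0.
Proof.
  intros Hf Hab HA HB ZA ZB e. apply integral_not_integrable. intros Hint. apply Hf.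
  apply (integrable_plus_compact f (fun x => e * A x + e ^ 2 * B x) a b).
  - destruct Hint as [l Hl]. exists l.
    eapply improper_int_ext; [|exact Hl]. intros x. simpl. ring.
  - exact Hab.
  - intros x. apply continuous_Rplus; now apply continuous_Rscal.
  - intros x Hx. rewrite ZA, ZB by exact Hx. ring.
Qed.

Lemma continuous_pos_locally (D : R -> R) x0 : continuous D x0 -> 0 < D x0 ->
  exists r, 0 < r /\ forall x, x0 - r < x < x0 + r -> 0 < D x.
Proof.
  intros Hc Hpos.
  assert (L : locally (D x0) (fun y => 0 < y))
    by (apply locally_interval with (Finite 0) p_infty; simpl; auto).
  destruct (Hc _ L) as [r Hr]. exists r. split; [apply cond_pos|].
  intros x Hx. apply Hr.
  unfold ball; simpl; unfold AbsRing_ball, abs, minus, plus, opp; simpl.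
  apply Rabs_def1; lra.
Qed.

Lemma fundamental_lemma (D : R -> R) : (forall x, continuous D x) ->
  (forall a b, a < b -> RInt (fun x => D x * bump a b x) a b = 0) -> forall x, D x = 0.
Proof.
  assert (Hnot_pos : forall F : R -> R, (forall x, continuous F x) ->
            (forall a b, a < b -> RInt (fun x => F x * bump a b x) a b = 0) ->
            forall x0, ~ 0 < F x0).
  { intros F Hc H0 x0 Hx0.
    destruct (continuous_pos_locally F x0 (Hc x0) Hx0) as [r [Hr Hpos]].
    assert (Hint : 0 < RInt (fun x => F x * bump (x0 - r) (x0 + r) x) (x0 - r) (x0 + r)).
    { apply RInt_gt_0; [lra| |].
      - intros x Hx. apply Rmult_lt_0_compat; [apply Hpos; lra | apply bump_pos; lra].
      - intros x _. apply continuous_Rmult; [apply Hc | apply smooth_continuous, smooth_bump]. }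
    rewrite H0 in Hint by lra. lra. }
  intros Hc H0 x. destruct (Rtotal_order (D x) 0) as [Hneg|[Hzero|Hpos]]; [exfalso | exact Hzero |].
  - apply (Hnot_pos (fun y => -1 * D y)) with x; [| |lra].
    + intros y. now apply continuous_Rscal.
    + intros a b Hab.
      rewrite (RInt_ext (V := R_CompleteNormedModule) _ (fun y => -1 * (D y * bump a b y)))
        by (intros; simpl; ring).
      rewrite (RInt_scal (V := R_CompleteNormedModule)), H0 by
        (first [exact Hab | apply (ex_RInt_continuous (V := R_CompleteNormedModule)); intros;
         apply continuous_Rmult; [apply Hc | apply smooth_continuous, smooth_bump]]).
      apply Rmult_0_r.
  - exfalso. exact (Hnot_pos D Hc H0 x Hpos).
Qed.

Inductive slot : Type := slot_rho | slot_u | slot_nu (j : nat).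

Definition active_slot (n : nat) (s : slot) : Prop :=
  match s with slot_nu j => (j < n)%nat | _ => True end.

Definition component (s : slot) (d : field) : R -> R :=
  match s with slot_rho => fr d | slot_u => fu d | slot_nu j => fn d j end.

Definition along (s : slot) (b : R -> R) : field :=
  match s with
  | slot_rho => mkField b (fun _ => 0) (fun _ _ => 0)
  | slot_u => mkField (fun _ => 0) b (fun _ _ => 0)
  | slot_nu j => mkField (fun _ => 0) (fun _ => 0) (fun i x => kdelta i j * b x)
  end.

Definition pairing (n : nat) (d psi : field) (x : R) : R :=
  fr d x * fr psi x + fu d x * fu psi x + fsum n (fun k => fn d k x * fn psi k x).

Lemma pairing_along n s d b x : active_slot n s ->
  pairing n d (along s b) x = component s d x * b x.
Proof.
  intros Hs. unfold pairing. destruct s as [| |j]; simpl.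
  - rewrite fsum_eq0 by (intros; ring). ring.
  - rewrite fsum_eq0 by (intros; ring). ring.
  - rewrite (fsum_ext n _ (fun k => fn d k x * b x * kdelta k j)) by (intros; ring).
    rewrite fsum_kdelta_r by exact Hs. ring.
Qed.

Lemma test_field_along n s b : active_slot n s -> smooth b -> compact_support b ->
  test_field n (along s b).
Proof.
  intros Hs Hb Hcs.
  assert (S0 : smooth (fun _ => 0)) by apply smooth_const.
  assert (C0 : compact_support (fun _ => 0)) by now exists 0.
  destruct s as [| |j]; repeat split; simpl; auto.
  - apply smooth_mult; [apply smooth_const | exact Hb].
  - destruct Hcs as [M HM]. exists M. intros x Hx. rewrite HM by exact Hx. ring.
  - intros i Hi x. unfold kdelta. destruct (Nat.eqb_spec i j); [simpl in Hs; lia | ring].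
Qed.

Lemma var_deriv_continuous n C phi dC s x : var_deriv n C phi dC -> active_slot n s ->
  continuous (component s dC) x.
Proof. intros (Hr & Hu & Hn & _) Hs. destruct s; simpl; auto. Qed.

Lemma var_deriv_component n C phi dC s (E : R -> R) :
  var_deriv n C phi dC -> active_slot n s -> (forall x, continuous E x) ->
  (forall a b, a < b -> is_derive (fun e => C (field_axpy phi e (along s (bump a b)))) 0
                          (RInt (fun x => E x * bump a b x) a b)) ->
  forall x, component s dC x = E x.
Proof.
  intros Hv Hs HE HD x. apply Rminus_diag_uniq.
  assert (Hcb : forall h : R -> R, (forall x, continuous h x) -> forall a b x,
            continuous (fun y => h y * bump a b y) x).
  { intros h Hh a b y. apply continuous_Rmult; [apply Hh | apply smooth_continuous, smooth_bump]. }
  assert (HcdC : forall x, continuous (component s dC) x)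
    by (intros; now apply var_deriv_continuous with n C phi).
  apply (fundamental_lemma (fun y => component s dC y - E y)).
  { intros y. apply continuous_Rplus; [apply HcdC | now apply continuous_Ropp]. }
  intros a b Hab. destruct Hv as (_ & _ & _ & Hv).
  destruct (Hv _ (test_field_along n s (bump a b) Hs (smooth_bump a b) (compact_support_bump a b)))
    as [l [Hl Hder]].
  assert (Hl' : improper_int_is (fun y => component s dC y * bump a b y)
                  (RInt (fun y => component s dC y * bump a b y) a b)).
  { apply improper_int_compact; [lra | now apply Hcb|].
    intros y Hy. rewrite bump_out by lra. ring. }
  apply (improper_int_ext _ _ _ (fun y => pairing_along n s dC (bump a b) y Hs)) in Hl.
  rewrite (improper_int_unique _ _ _ Hl Hl') in Hder.
  apply is_derive_unique in Hder. specialize (HD a b Hab). apply is_derive_unique in HD.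
  rewrite Hder in HD.
  rewrite (RInt_ext _ (fun y => minus (component s dC y * bump a b y) (E y * bump a b y)))
    by (intros; unfold minus, plus, opp; simpl; ring).
  rewrite (RInt_minus (V := R_CompleteNormedModule)), HD by
    (apply (ex_RInt_continuous (V := R_CompleteNormedModule)); intros; now apply Hcb).
  unfold minus, plus, opp. simpl. ring.
Qed.

(* Along a single component all densities considered here are quadratic in [e]; a general
   perturbation of [rho * Q(nu)] would be cubic. *)
Definition quadratic_along (Ig : field -> R -> R) (phi : field) (s : slot) (E : R -> R) : Prop :=
  exists B : (R -> R) -> R -> R, (forall b, smooth b -> smooth (B b)) /\
    forall b e x, Ig (field_axpy phi e (along s b)) x
                  = Ig phi x + e * (E x * b x) + e ^ 2 * (B b x * b x).

(* [lam] is 0 when [Ig phi] is not integrable: [integral] then returns its junk value 0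
   along every perturbation line, so the variational derivative vanishes. *)
Lemma var_deriv_integral n (Ig : field -> R -> R) phi D dC :
  var_deriv n (fun p => integral (Ig p)) phi dC ->
  (forall s, active_slot n s ->
     smooth (component s D) /\ quadratic_along Ig phi s (component s D)) ->
  exists lam, forall s, active_slot n s -> forall x, component s dC x = lam * component s D x.
Proof.
  intros Hv HD.
  assert (Hpert : forall s, active_slot n s -> exists B : (R -> R) -> R -> R,
    (forall a b x, continuous (fun y => component s D y * bump a b y) x) /\
    (forall a b x, continuous (fun y => B (bump a b) y * bump a b y) x) /\
    forall a b e, integral (Ig (field_axpy phi e (along s (bump a b))))
      = integral (fun x => Ig phi x + e * (component s D x * bump a b x)
                           + e ^ 2 * (B (bump a b) x * bump a b x))).
  { intros s Hs. destruct (HD s Hs) as [HE [B [HB Hq]]]. exists B.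
    repeat split; intros.
    - apply smooth_continuous, smooth_mult; [exact HE | apply smooth_bump].
    - apply smooth_continuous, smooth_mult; [apply HB | ]; apply smooth_bump.
    - f_equal. apply functional_extensionality. intros x. apply Hq. }
  assert (Hout : forall (h : R -> R) a b x, x < a \/ b < x -> h x * bump a b x = 0)
    by (intros; rewrite bump_out by lra; ring).
  destruct (classic (integrable (Ig phi))) as [[l Hl] | Hnot]; [exists 1 | exists 0];
    intros s Hs; destruct (Hpert s Hs) as [B [HcA [HcB Hint]]];
    apply (var_deriv_component n _ phi dC s _ Hv Hs).
  - intros x. apply continuous_Rscal, smooth_continuous, (HD s Hs).
  - intros a b Hab.
    rewrite (RInt_ext (V := R_CompleteNormedModule) _ (fun x => component s D x * bump a b x))
      by (intros; simpl; ring).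
    eapply is_derive_ext; [intros e; symmetry; apply Hint|].
    apply (is_derive_integral_quadratic _ _ _ a b l Hl); auto; lra.
  - intros x. apply continuous_Rscal, smooth_continuous, (HD s Hs).
  - intros a b Hab. rewrite RInt_eq0 by (intros; ring).
    eapply is_derive_ext; [intros e; symmetry; rewrite Hint;
      apply (integral_quadratic_not_integrable _ _ _ a b Hnot); auto; lra|].
    apply is_derive_Rconst.
Qed.

Lemma bracket_density_scale n g phi D dC dF lam :
  (forall s, active_slot n s -> forall x, component s dC x = lam * component s D x) ->
  forall x, bracket_density n g phi dC dF x = lam * bracket_density n g phi D dF x.
Proof.
  intros H x.
  assert (HR := H slot_rho I). assert (HU := H slot_u I).
  assert (HN : forall k, (k < n)%nat -> forall y, fn dC k y = lam * fn D k y)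
    by (intros k Hk; exact (H (slot_nu k) Hk)).
  simpl in HR, HU. unfold bracket_density.
  rewrite (Derive_ext (fu dC) (fun y => lam * fu D y) x HU), Derive_scal, HR, HU.
  rewrite (fsum_ext n _ (fun k => lam * (Derive (fn phi k) x *
             (fu D x * fn dF k x / fr phi x - fn D k x / fr phi x * fu dF x))))
    by (intros k Hk; rewrite HN by exact Hk; unfold Rdiv; ring).
  rewrite (fsum_ext n (fun k => fsum n (fun l =>
             Derive (fun y => fn dC k y / fr phi y) x * g k l * (fn dF l x / fr phi x)))
                      (fun k => lam * fsum n (fun l =>
             Derive (fun y => fn D k y / fr phi y) x * g k l * (fn dF l x / fr phi x)))).
  - rewrite !fsum_scal. ring.
  - intros k Hk. rewrite <- fsum_scal. apply fsum_ext. intros l _.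
    rewrite (Derive_ext (fun y => fn dC k y / fr phi y) (fun y => lam * (fn D k y / fr phi y)))
      by (intros; rewrite HN by exact Hk; unfold Rdiv; ring).
    rewrite Derive_scal. ring.
Qed.

Lemma improper_int_scal c (f : R -> R) l :
  improper_int_is f l -> improper_int_is (fun x => c * f x) (c * l).
Proof.
  unfold improper_int_is. intros H.
  exact (is_RInt_gen_scal (V := R_NormedModule) (Fa := Rbar_locally m_infty)
           (Fb := Rbar_locally p_infty) f c l H).
Qed.

Lemma casimir_of_integral n g (Ig : field -> R -> R) (D : field -> field) :
  (forall phi, admissible n phi -> forall s, active_slot n s ->
     smooth (component s (D phi)) /\ quadratic_along Ig phi s (component s (D phi))) ->
  (forall phi dF, admissible n phi -> regular_deriv n dF ->
     improper_int_is (bracket_density n g phi (D phi) dF) 0) ->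
  is_casimir n g (fun p => integral (Ig p)).
Proof.
  intros HD Hexact phi Hadm dC Hv _ dF _ Hreg.
  destruct (var_deriv_integral n Ig phi (D phi) dC Hv (HD phi Hadm)) as [lam Hlam].
  rewrite <- (Rmult_0_r lam).
  apply (improper_int_ext (fun x => lam * bracket_density n g phi (D phi) dF x)).
  - intros x. symmetry. now apply bracket_density_scale.
  - apply improper_int_scal, Hexact; assumption.
Qed.

Section QuadraticForm.

Variables (n : nat) (G : nat -> nat -> R).

Definition bform (a b : nat -> R) : R := fsum n (fun k => fsum n (fun l => a k * G k l * b l)).

Definition qgrad (a : nat -> R) (j : nat) : R :=
  fsum n (fun l => G j l * a l) + fsum n (fun i => a i * G i j).

Lemma bform_ext a a' b b' : (forall i, (i < n)%nat -> a i = a' i) ->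
  (forall i, (i < n)%nat -> b i = b' i) -> bform a b = bform a' b'.
Proof.
  intros Ha Hb. apply fsum_ext. intros k Hk. apply fsum_ext. intros l Hl.
  now rewrite Ha, Hb.
Qed.

Lemma bform_plus_l a a' b : bform (fun i => a i + a' i) b = bform a b + bform a' b.
Proof.
  unfold bform. rewrite <- fsum_plus. apply fsum_ext. intros k _.
  rewrite <- fsum_plus. apply fsum_ext. intros; ring.
Qed.

Lemma bform_plus_r a b b' : bform a (fun i => b i + b' i) = bform a b + bform a b'.
Proof.
  unfold bform. rewrite <- fsum_plus. apply fsum_ext. intros k _.
  rewrite <- fsum_plus. apply fsum_ext. intros; ring.
Qed.

Lemma bform_scal_l t a b : bform (fun i => t * a i) b = t * bform a b.
Proof.
  unfold bform. rewrite <- fsum_scal. apply fsum_ext. intros k _.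
  rewrite <- fsum_scal. apply fsum_ext. intros; ring.
Qed.

Lemma bform_scal_r t a b : bform a (fun i => t * b i) = t * bform a b.
Proof.
  unfold bform. rewrite <- fsum_scal. apply fsum_ext. intros k _.
  rewrite <- fsum_scal. apply fsum_ext. intros; ring.
Qed.

Lemma bform_kdelta_l j b : (j < n)%nat ->
  bform (fun i => kdelta i j) b = fsum n (fun l => G j l * b l).
Proof.
  intros Hj. unfold bform.
  rewrite (fsum_ext n _ (fun k => fsum n (fun l => G k l * b l) * kdelta k j))
    by (intros; rewrite <- fsum_scal_r; apply fsum_ext; intros; ring).
  now apply fsum_kdelta_r.
Qed.

Lemma bform_kdelta_r j a : (j < n)%nat ->
  bform a (fun i => kdelta i j) = fsum n (fun k => a k * G k j).
Proof.
  intros Hj. unfold bform. apply fsum_ext. intros k _.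
  exact (fsum_kdelta_r n j (fun l => a k * G k l) Hj).
Qed.

Lemma bform_shift a j e : (j < n)%nat ->
  bform (fun i => a i + e * kdelta i j) (fun i => a i + e * kdelta i j)
  = bform a a + e * qgrad a j + e ^ 2 * G j j.
Proof.
  intros Hj. unfold qgrad.
  rewrite bform_plus_l, !bform_plus_r, !bform_scal_l, !bform_scal_r.
  rewrite bform_kdelta_l, bform_kdelta_r, bform_kdelta_l by exact Hj.
  rewrite fsum_kdelta_r by exact Hj. ring.
Qed.

Lemma fsum_mult_qgrad c a : fsum n (fun k => c k * qgrad a k) = bform c a + bform a c.
Proof.
  unfold qgrad, bform.
  rewrite (fsum_swap n n (fun k l => a k * G k l * c l)), <- fsum_plus.
  apply fsum_ext. intros k _.
  rewrite Rmult_plus_distr_l, <- !fsum_scal. f_equal; apply fsum_ext; intros; ring.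
Qed.

Lemma is_derive_bform (a b a' b' : nat -> R -> R) x :
  (forall i, (i < n)%nat -> is_derive (a i) x (a' i x)) ->
  (forall i, (i < n)%nat -> is_derive (b i) x (b' i x)) ->
  is_derive (fun y => bform (fun i => a i y) (fun i => b i y)) x
    (bform (fun i => a' i x) (fun i => b i x) + bform (fun i => a i x) (fun i => b' i x)).
Proof.
  intros Ha Hb. unfold bform. rewrite <- fsum_plus.
  apply is_derive_fsum. intros k Hk. rewrite <- fsum_plus.
  apply is_derive_fsum. intros l Hl.
  apply is_derive_ext with (fun y => a k y * (G k l * b l y));
    [intros t; symmetry; apply Rmult_assoc|].
  replace (a' k x * G k l * b l x + a k x * G k l * b' l x)
    with (a' k x * (G k l * b l x) + a k x * (G k l * b' l x)) by ring.
  apply (is_derive_Rmult (a k) (fun y => G k l * b l y)); [auto | apply is_derive_scal; auto].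
Qed.

Lemma is_derive_qgrad (a a' : nat -> R -> R) j x :
  (forall i, (i < n)%nat -> is_derive (a i) x (a' i x)) ->
  is_derive (fun y => qgrad (fun i => a i y) j) x (qgrad (fun i => a' i x) j).
Proof.
  intros Ha. unfold qgrad.
  apply is_derive_Rplus; apply is_derive_fsum; intros i Hi.
  - apply is_derive_scal. auto.
  - rewrite Rmult_comm. apply is_derive_ext with (fun y => G i j * a i y);
      [intros; apply Rmult_comm | apply is_derive_scal; auto].
Qed.

Lemma smooth_bform (a b : nat -> R -> R) :
  (forall i, (i < n)%nat -> smooth (a i)) -> (forall i, (i < n)%nat -> smooth (b i)) ->
  smooth (fun x => bform (fun i => a i x) (fun i => b i x)).
Proof.
  intros Ha Hb. apply smooth_fsum. intros k Hk. apply smooth_fsum. intros l Hl.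
  apply smooth_mult; [apply smooth_mult; [apply Ha, Hk | apply smooth_const] | apply Hb, Hl].
Qed.

Lemma smooth_qgrad (a : nat -> R -> R) j :
  (forall i, (i < n)%nat -> smooth (a i)) -> smooth (fun x => qgrad (fun i => a i x) j).
Proof.
  intros Ha. apply smooth_plus; apply smooth_fsum; intros i Hi.
  - apply smooth_mult; [apply (smooth_const (G j i)) | apply Ha, Hi].
  - apply smooth_mult; [apply Ha, Hi | apply (smooth_const (G i j))].
Qed.

Lemma vanishes_bform (a b : nat -> R -> R) :
  (forall i, (i < n)%nat -> vanishes_at_infinity (a i)) ->
  (forall i, (i < n)%nat -> vanishes_at_infinity (b i)) ->
  vanishes_at_infinity (fun x => bform (fun i => a i x) (fun i => b i x)).
Proof.
  intros Ha Hb. apply vanishes_fsum. intros k Hk. apply vanishes_fsum. intros l Hl.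
  apply vanishes_ext with (fun x => G k l * (a k x * b l x)); [intros; ring|].
  apply vanishes_scal, vanishes_mult; auto.
Qed.

End QuadraticForm.

Definition grad_C_rho : field := mkField (fun _ => 1) (fun _ => 0) (fun _ _ => 0).

Lemma casimir_C_rho n g : is_casimir n g C_rho.
Proof.
  apply (casimir_of_integral n g (fun p x => fr p x) (fun _ => grad_C_rho)).
  - intros phi _ s _. split; [destruct s; simpl; apply smooth_const|].
    exists (fun _ _ => 0). split; [intros; apply smooth_const|].
    intros b e x. destruct s; simpl; ring.
  - intros phi dF (_ & _ & Hrho & _) (_ & _ & Hu & Hdu & _).
    apply (improper_int_ext (Derive (fun x => - fu dF x))).
    + intros x. unfold bracket_density. simpl.
      rewrite Derive_opp, Derive_const, !fsum_eq0; [ring | |].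
      * intros k _. apply fsum_eq0. intros l _.
        rewrite (Derive_eq_const _ 0) by (intros; unfold Rdiv; ring). ring.
      * intros k _. unfold Rdiv. ring.
    + apply improper_int_Derive_vanishing; [now apply smooth_opp|].
      now apply vanishes_opp, decaying_vanishes.
Qed.

Definition grad_C_nu (k : nat) (phi : field) : field :=
  mkField (fn phi k) (fun _ => 0) (fun j x => kdelta j k * fr phi x).

Lemma casimir_C_nu n g k : (k < n)%nat -> is_casimir n g (C_nu k).
Proof.
  intros Hk.
  apply (casimir_of_integral n g (fun p x => fr p x * fn p k x) (grad_C_nu k)).
  - intros phi (Hr & _ & _ & _ & _ & Hn) s _. split.
    + destruct s; simpl; [apply Hn, Hk | apply smooth_const |].
      apply smooth_mult; [apply smooth_const | exact Hr].
    + exists (fun _ _ => 0). split; [intros; apply smooth_const|].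
      intros b e x. destruct s; simpl; [ring | ring |]. rewrite kdelta_sym. ring.
  - intros phi dF (_ & _ & Hrho & _ & _ & Hn) (_ & _ & Hu & Hdu & _).
    destruct (Hn k Hk) as [Hnk Hdnk].
    apply (improper_int_ext (Derive (fun x => - (fn phi k x * fu dF x)))).
    + intros x. unfold bracket_density. simpl.
      rewrite Derive_opp, Derive_mult, Derive_const by (now apply smooth_ex_derive).
      rewrite (fsum_eq0 n (fun j => fsum n _)).
      * rewrite (fsum_ext n _ (fun j => kdelta k j * (- Derive (fn phi j) x * fu dF x))).
        -- rewrite fsum_kdelta_l by exact Hk. ring.
        -- intros j _. rewrite kdelta_sym. field. apply Hrho.
      * intros j _. apply fsum_eq0. intros l _.
        rewrite (Derive_eq_const _ (kdelta j k)) by (intros; field; apply Hrho). ring.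
    + apply improper_int_Derive_vanishing.
      * now apply smooth_opp, smooth_mult.
      * now apply vanishes_opp, vanishes_mult; apply decaying_vanishes.
Qed.

Section InverseMetric.

Variables (n : nat) (g ginv : nat -> nat -> R).
Hypothesis g_sym : forall i j, (i < n)%nat -> (j < n)%nat -> g i j = g j i.
Hypothesis g_ginv : forall i j, (i < n)%nat -> (j < n)%nat ->
  fsum n (fun k => g i k * ginv k j) = kdelta i j.
Hypothesis ginv_g : forall i j, (i < n)%nat -> (j < n)%nat ->
  fsum n (fun k => ginv i k * g k j) = kdelta i j.

Lemma fsum_qgrad_inverse a l : (l < n)%nat ->
  fsum n (fun k => qgrad n ginv a k * g k l) = 2 * a l.
Proof.
  intros Hl. unfold qgrad.
  rewrite (fsum_ext n _ (fun k => fsum n (fun m => a m * (ginv k m * g k l))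
                                + fsum n (fun i => a i * (ginv i k * g k l)))).
  2: { intros k _. rewrite Rmult_plus_distr_r, <- !fsum_scal_r.
       f_equal; apply fsum_ext; intros; ring. }
  rewrite fsum_plus, (fsum_swap n n (fun k m => a m * (ginv k m * g k l))),
    (fsum_swap n n (fun k i => a i * (ginv i k * g k l))).
  rewrite (fsum_ext n (fun m => fsum n (fun k => a m * (ginv k m * g k l)))
                      (fun m => a m * kdelta m l)).
  2: { intros m Hm. rewrite fsum_scal, kdelta_sym, <- g_ginv by assumption. f_equal.
       apply fsum_ext. intros k Hk. rewrite (g_sym k l) by assumption. ring. }
  rewrite (fsum_ext n (fun i => fsum n (fun k => a i * (ginv i k * g k l)))
                      (fun i => a i * kdelta i l))
    by (intros i Hi; rewrite fsum_scal, ginv_g by assumption; reflexivity).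
  rewrite fsum_kdelta_r by exact Hl. ring.
Qed.

Lemma fsum_qgrad_contract (c w : nat -> R) :
  fsum n (fun k => fsum n (fun l => - / 2 * qgrad n ginv c k * g k l * w l))
  = - fsum n (fun l => c l * w l).
Proof.
  rewrite fsum_swap.
  rewrite (fsum_ext n _ (fun l => - / 2 * w l * fsum n (fun k => qgrad n ginv c k * g k l)))
    by (intros; rewrite <- fsum_scal; apply fsum_ext; intros; ring).
  rewrite (fsum_ext n _ (fun l => -1 * (c l * w l)))
    by (intros l Hl; rewrite fsum_qgrad_inverse by exact Hl; field).
  rewrite fsum_scal. ring.
Qed.

Definition nu_at (phi : field) (x : R) : nat -> R := fun k => fn phi k x.

Definition grad_C_mix (phi : field) : field :=
  mkField (fun x => - (bform n ginv (nu_at phi x) (nu_at phi x) / 2)) (fun _ => 1)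
          (fun j x => - (fr phi x / 2 * qgrad n ginv (nu_at phi x) j)).

Definition density_C_mix (p : field) (x : R) : R :=
  fu p x - fr p x / 2 * bform n ginv (nu_at p x) (nu_at p x).

Lemma first_variation_C_mix phi : admissible n phi -> forall s, active_slot n s ->
  smooth (component s (grad_C_mix phi)) /\
  quadratic_along density_C_mix phi s (component s (grad_C_mix phi)).
Proof.
  intros (Hr & _ & _ & _ & _ & Hn) s Hs.
  assert (Hnu : forall i, (i < n)%nat -> smooth (fn phi i)) by (intros i Hi; apply Hn, Hi).
  split; destruct s as [| |j].
  - apply smooth_ext with (fun x => - / 2 * bform n ginv (nu_at phi x) (nu_at phi x));
      [intros; simpl; field | apply smooth_mult; [apply smooth_const | now apply smooth_bform]].
  - simpl. apply smooth_const.
  - apply smooth_ext with (fun x => - / 2 * (fr phi x * qgrad n ginv (nu_at phi x) j));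
      [intros; simpl; field|].
    apply smooth_mult; [apply smooth_const | apply smooth_mult; [exact Hr|]].
    now apply smooth_qgrad.
  1, 2: exists (fun _ _ => 0); split; [intros; apply smooth_const|];
    intros b e x; unfold density_C_mix; simpl;
    rewrite (bform_ext n ginv _ (nu_at phi x) _ (nu_at phi x))
      by (intros; unfold nu_at; simpl; ring);
    field.
  - exists (fun b x => - / 2 * ginv j j * (fr phi x * b x)). split.
    { intros b Hb. apply smooth_mult; [apply smooth_const | now apply smooth_mult]. }
    intros b e x. unfold density_C_mix. simpl.
    set (v := fun i => nu_at phi x i + e * b x * kdelta i j).
    rewrite (bform_ext n ginv _ v _ v) by (intros; unfold v, nu_at; simpl; ring).
    unfold v. rewrite bform_shift by exact Hs. field.
Qed.

Lemma bracket_C_mix_exact phi dF : admissible n phi -> regular_deriv n dF -> forall x,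
  bracket_density n g phi (grad_C_mix phi) dF x
  = Derive (fun y => / 2 * (bform n ginv (nu_at phi y) (nu_at phi y) * fu dF y)) x.
Proof.
  intros (_ & _ & Hrho & _ & _ & Hn) (_ & _ & Hu & _ & _) x.
  set (nu' := fun k => Derive (fn phi k) x).
  assert (Hnu : forall i, (i < n)%nat -> is_derive (fn phi i) x (Derive (fn phi i) x))
    by (intros i Hi; apply smooth_is_derive, Hn, Hi).
  assert (DPhi : Derive (fun y => / 2 * (bform n ginv (nu_at phi y) (nu_at phi y) * fu dF y)) x
    = / 2 * ((bform n ginv nu' (nu_at phi x) + bform n ginv (nu_at phi x) nu') * fu dF x
             + bform n ginv (nu_at phi x) (nu_at phi x) * Derive (fu dF) x)).
  { apply is_derive_unique, is_derive_scal.
    apply (is_derive_Rmult (fun y => bform n ginv (nu_at phi y) (nu_at phi y)));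
      [exact (is_derive_bform n ginv (fn phi) (fn phi) (fun i => Derive (fn phi i))
                (fun i => Derive (fn phi i)) x Hnu Hnu)
      | apply smooth_is_derive, Hu]. }
  assert (DS : forall k,
    Derive (fun y => - (fr phi y / 2 * qgrad n ginv (nu_at phi y) k) / fr phi y) x
    = - / 2 * qgrad n ginv nu' k).
  { intros k. rewrite (Derive_ext _ (fun y => - / 2 * qgrad n ginv (nu_at phi y) k))
      by (intros y; field; apply Hrho).
    apply is_derive_unique, is_derive_scal.
    exact (is_derive_qgrad n ginv (fn phi) (fun i => Derive (fn phi i)) k x Hnu). }
  assert (Tnu : fsum n (fun k => Derive (fn phi k) x *
       (1 * fn dF k x / fr phi x
        - - (fr phi x / 2 * qgrad n ginv (nu_at phi x) k) / fr phi x * fu dF x))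
    = fsum n (fun k => nu' k * (fn dF k x / fr phi x))
      + (bform n ginv nu' (nu_at phi x) + bform n ginv (nu_at phi x) nu') * (fu dF x / 2)).
  { rewrite <- fsum_mult_qgrad, <- fsum_scal_r, <- fsum_plus. apply fsum_ext. intros k _.
    unfold nu'. field. apply Hrho. }
  assert (Tg : fsum n (fun k => fsum n (fun l =>
       Derive (fun y => - (fr phi y / 2 * qgrad n ginv (nu_at phi y) k) / fr phi y) x * g k l
       * (fn dF l x / fr phi x)))
    = - fsum n (fun k => nu' k * (fn dF k x / fr phi x))).
  { rewrite <- fsum_qgrad_contract. apply fsum_ext. intros k _. apply fsum_ext. intros l _.
    now rewrite DS. }
  rewrite DPhi. unfold bracket_density. cbn [grad_C_mix fr fu fn].
  rewrite Derive_const, Tnu, Tg. field.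
Qed.

Lemma casimir_C_mix : is_casimir n g (C_mix n ginv).
Proof.
  apply (casimir_of_integral n g density_C_mix grad_C_mix); [exact first_variation_C_mix|].
  intros phi dF Hadm Hreg.
  apply (improper_int_ext _ _ _ (fun x => eq_sym (bracket_C_mix_exact phi dF Hadm Hreg x))).
  destruct Hadm as (_ & _ & _ & _ & _ & Hn). destruct Hreg as (_ & _ & Hu & Hdu & _).
  apply improper_int_Derive_vanishing.
  - apply smooth_mult; [apply smooth_const|].
    apply smooth_mult; [apply smooth_bform; intros i Hi; apply Hn, Hi | exact Hu].
  - apply vanishes_scal, vanishes_mult; [|now apply decaying_vanishes].
    apply vanishes_bform; intros i Hi; apply decaying_vanishes, Hn, Hi.
Qed.

End InverseMetric.

Theorem lemma2 (n : nat) (g ginv : nat -> nat -> R)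
  (g_sym : forall i j, (i < n)%nat -> (j < n)%nat -> g i j = g j i)
  (g_ginv : forall i j, (i < n)%nat -> (j < n)%nat ->
              fsum n (fun k => g i k * ginv k j) = kdelta i j)
  (ginv_g : forall i j, (i < n)%nat -> (j < n)%nat ->
              fsum n (fun k => ginv i k * g k j) = kdelta i j) :
  is_casimir n g C_rho /\
  (forall k, (k < n)%nat -> is_casimir n g (C_nu k)) /\
  is_casimir n g (C_mix n ginv).
Proof.
  split; [|split].
  - apply casimir_C_rho.
  - intros k Hk. now apply casimir_C_nu.
  - now apply casimir_C_mix.
Qed.
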